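(* Assume the setting of the context. Then: (1) $y$ admits a constant arithmetic subsequence (there exist $p\ge1$, $k\in\mathbb Z$, $b\in\mathcal B$ with $y_{k+np}=b$ for all $n\in\mathbb Z$) if and only if some vertex $\mathcal C$ of $G(\sigma)$ satisfies that $\phi(\mathcal C)$ is a singleton; (2) $y$ is periodic if and only if there exists $N$ such that every walk of length at least $N$ in $G(\sigma)$ ends at a vertex $\mathcal C$ with $\phi(\mathcal C)$ a singleton.
   Context: Let $\sigma:\mathcal A^*\to\mathcal A^*$ be a primitive substitution of constant length $l\ge2$, $x\in\mathcal A^{\mathbb Z}$ an admissible two-sided fixed point of $\sigma$ (so $x_{lj+i}=\sigma(x_j)_i$, $w_i$ being the $i$-th letter of $w$ indexed from $0$), $\phi:\mathcal A\to\mathcal B$ a coding, $y=\phi(x)$; the subshift generated by $x$ is assumed non-periodic. Height $h=\max\{n\ge1 : \gcd(n,l)=1,\ n\mid g_0\}$, $g_0=\gcd\{n\ge1:x_n=x_0\}$. For $0\le i<h$, $\mathcal A_i=\{x_{i+nh}:n\in\mathbb Z\}$. Graph $G(\sigma)$: vertices are subsets of $\mathcal A$; for a subset $\mathcal C$ and $0\le i<l$ there is an edge labelled $i$ from $\mathcal C$ to $\{\sigma(b)_i : b\in\mathcal C\}$; $G(\sigma)$ is restricted to vertices reachable from $\mathcal A_0,\dots,\mathcal A_{h-1}$. $\phi(\mathcal C)=\{\phi(c):c\in\mathcal C\}$. *)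

From HB Require Import structures.
From mathcomp Require Import all_boot all_order all_algebra.
Set Implicit Arguments. Unset Strict Implicit. Unset Printing Implicit Defensive.
Import Order.TTheory GRing.Theory Num.Theory.
Local Open Scope ring_scope.

(* A substitution of constant length l is a map sigma : A -> l.-tuple A;
   sigma(b)_i is  tnth (sigma b) i  for i : 'I_l. *)

(* i-th letter (indexed from 0) of sigma^n(a); meaningful for i < l^n. *)
Fixpoint subst_iter (A : finType) (l : nat) (sigma : A -> l.-tuple A)
    (n : nat) (a : A) (i : nat) : A :=
  match n with
  | 0 => a
  | n'.+1 => nth a (sigma (subst_iter sigma n' a (i %/ l)%N)) (i %% l)%N
  end.

Definition primitive (A : finType) (l : nat) (sigma : A -> l.-tuple A) : Prop :=
  exists n : nat, (0 < n)%N /\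
    forall a b : A, exists i : nat, (i < l ^ n)%N /\ subst_iter sigma n a i = b.

Definition two_sided_fixed_point (A : finType) (l : nat)
    (sigma : A -> l.-tuple A) (x : int -> A) : Prop :=
  forall (j : int) (i : 'I_l), x (l%:Z * j + (i : nat)%:Z) = tnth (sigma (x j)) i.

Definition admissible (A : finType) (l : nat) (sigma : A -> l.-tuple A)
    (x : int -> A) : Prop :=
  exists (n : nat) (a : A) (i : nat), (i.+1 < l ^ n)%N /\
    subst_iter sigma n a i = x (-1) /\ subst_iter sigma n a i.+1 = x 0.

Definition periodic (T : Type) (z : int -> T) : Prop :=
  exists p : nat, (0 < p)%N /\ forall n : int, z (n + p%:Z) = z n.

Definition has_const_arith_subseq (T : Type) (z : int -> T) : Prop :=
  exists (p : nat) (k : int) (b : T), (0 < p)%N /\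
    forall n : int, z (k + n * p%:Z) = b.

(* h is the height: the largest n >= 1 with gcd(n,l)=1 and n | g0, where
   g0 = gcd {m >= 1 : x_m = x_0}; "n | g0" is unfolded as
   "n divides every m >= 1 with x_m = x_0". *)
Definition divides_return_times (A : finType) (x : int -> A) (n : nat) : Prop :=
  forall m : nat, (1 <= m)%N -> x m%:Z = x 0 -> (n %| m)%N.

Definition is_height (A : finType) (l : nat) (x : int -> A) (h : nat) : Prop :=
  [/\ (1 <= h)%N, coprime h l, divides_return_times x h &
      forall n : nat, (1 <= n)%N -> coprime n l -> divides_return_times x n ->
        (n <= h)%N].

(* Vertices of G(sigma) are subsets of A, represented as predicates A -> Prop. *)
Definition vset (A : Type) := A -> Prop.

Definition height_class (A : finType) (x : int -> A) (h i : nat) : vset A :=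
  fun a => exists n : int, x (i%:Z + n * h%:Z) = a.

(* edge labelled i : C -> { sigma(b)_i : b in C } *)
Definition gstep (A : finType) (l : nat) (sigma : A -> l.-tuple A)
    (C : vset A) (i : 'I_l) : vset A :=
  fun a => exists b, C b /\ tnth (sigma b) i = a.

Definition gwalk (A : finType) (l : nat) (sigma : A -> l.-tuple A)
    (C : vset A) (w : seq 'I_l) : vset A :=
  foldl (gstep sigma) C w.

Definition image_singleton (A B : Type) (phi : A -> B) (C : vset A) : Prop :=
  exists b : B, (exists c, C c) /\ forall c, C c -> phi c = b.

From HB Require Import structures.
From mathcomp Require Import all_boot all_order all_algebra.
From mathcomp Require Import cyclic zify ring.
From Stdlib Require Import ClassicalEpsilon.
Import Order.TTheory GRing.Theory Num.Theory.
Set Implicit Arguments. Unset Strict Implicit.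
Local Open Scope ring_scope.

(* Let M = h q with q coprime to l, and choose E with l ^ E = 1 (mod M) and every letter
   occurring in every sigma^E(a).  As x_(l^E t + c) = sigma^E(x_t)_c and l^E t = t (mod M),
   a letter b occurs along r + MZ iff x_0 occurs along r - tau(b) + MZ, where tau(b) is a
   position of b in sigma^E(x_0).  The translations preserving the classes along which x_0
   occurs form a group G containing MZ.  Expanding positions in base l^E (the admissible word
   x_(-1) x_0 links the two half-lines) puts every return time of x_0 in G, so G = dZ with
   d | M, d coprime to l and d dividing all return times; by maximality of the height, d | h.
   Hence every letter occurring along r + hZ already occurs along r + hqZ.
   The vertex reached from A_j by a word w of length K consists of the letters at positions
   l^K (j + nh) + code(w), so all of them occur along one class modulo l^K h q.  Since every
   p divides some l^K q with q coprime to l, a constant subsequence or a period of y makes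
   phi constant on such vertices; conversely, a vertex with singleton image makes y constant
   along l^K j + code(w) + l^K h Z. *)

Lemma int_divn_eq (k : int) (L : nat) : (0 < L)%N ->
  exists (m : int) (c : nat), (c < L)%N /\ k = L%:Z * m + c%:Z.
Proof.
move=> L_gt0; have L_neq0 : L%:Z != 0 by rewrite eqz_nat -lt0n.
exists (k %/ L)%Z, `|(k %% L)%Z|%N.
have modE : (`|(k %% L)%Z|%N)%:Z = (k %% L)%Z by rewrite gez0_abs ?modz_ge0.
split; first by rewrite -ltz_nat modE ltz_pmod // ltz_nat.
by rewrite modE mulrC -divz_eq.
Qed.

Lemma nat_base_ind (L : nat) (Q : int -> Prop) : (1 < L)%N -> Q 0 ->
    (forall t c, (c < L)%N -> Q t -> Q (L%:Z * t + c%:Z)) ->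
  forall n : nat, Q n%:Z.
Proof.
move=> L_gt1 Q0 QS; elim/ltn_ind=> n IH; case: (posnP n) => [-> // | n_gt0].
rewrite (divn_eq n L) PoszD PoszM mulrC.
by apply: QS; [rewrite ltn_pmod // ltnW | exact/IH/ltn_Pdiv].
Qed.

Lemma int_base_ind (L : nat) (Q : int -> Prop) : (1 < L)%N -> Q 0 -> Q (-1) ->
    (forall t c, (c < L)%N -> Q t -> Q (L%:Z * t + c%:Z)) ->
  forall t, Q t.
Proof.
move=> L_gt1 Q0 Qm1 QS [n | n]; first exact: (nat_base_ind L_gt1).
elim/ltn_ind: n => n IH; case: (posnP n) => [-> // | n_gt0].
have c_lt : (L.-1 - n %% L < L)%N by lia.
have -> : Negz n = L%:Z * Negz (n %/ L) + (L.-1 - n %% L)%N%:Z.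
  rewrite {1}(divn_eq n L); move: (n %/ L)%N (n %% L)%N (ltn_pmod n (ltnW L_gt1)).
  move=> a b b_lt; rewrite !NegzE -subn1 -subnDA -subzn ?addn1 //.
  by rewrite -[(a * L + b).+1]addn1 -[a.+1]addn1 !PoszD PoszM; ring.
by apply: QS c_lt _; exact/IH/ltn_Pdiv.
Qed.

Lemma periodic_mulz (T : Type) (z : int -> T) (p : int) :
  (forall n, z (n + p) = z n) -> forall n m, z (n + m * p) = z n.
Proof.
move=> zp n m.
have zpn (k : nat) n' : z (n' + k%:Z * p) = z n'.
  elim: k n' => [|k IH] n'; first by rewrite mul0r addr0.
  by rewrite -[k.+1]addn1 PoszD mulrDl mul1r addrA zp IH.
case: m => k; first exact: zpn.
by rewrite -(zpn k.+1) NegzE mulNr subrK.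
Qed.

(* Modulo M, -k is the multiple (M - 1) k of k. *)
Lemma closed_shift_opp (Q : int -> Prop) (M : nat) (k : int) : (0 < M)%N ->
    (forall r z, Q r -> Q (r + z * M%:Z)) -> (forall r, Q r -> Q (r + k)) ->
  forall r, Q r -> Q (r - k).
Proof.
move=> M_gt0 QM Qk.
have Qkn (j : nat) r : Q r -> Q (r + j%:Z * k).
  elim: j r => [|j IH] r Qr; first by rewrite mul0r addr0.
  by rewrite -[j.+1]addn1 PoszD mulrDl mul1r addrA; apply/Qk/IH.
move=> r /(Qkn M.-1) /(QM _ (- k)).
suff -> : r + (M.-1)%:Z * k + - k * M%:Z = r - k by [].
rewrite -{2}(prednK M_gt0) -addn1 PoszD; ring.
Qed.

Lemma coprime_part_dvd (l p : nat) : (0 < p)%N ->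
  exists K q : nat, [/\ coprime q l, (0 < q)%N & (p %| l ^ K * q)%N].
Proof.
elim/ltn_ind: p => p IH p_gt0.
case cpl: (coprime p l); first by exists 0%N, p; rewrite expn0 mul1n.
have g_gt1 : (1 < gcdn p l)%N.
  by rewrite ltn_neqAle gcdn_gt0 p_gt0 andbT eq_sym; move: cpl; rewrite /coprime => ->.
have pg_gt0 : (0 < p %/ gcdn p l)%N by rewrite divn_gt0 ?gcdn_gt0 ?p_gt0 // dvdn_leq // dvdn_gcdl.
have [K [q [cql q_gt0 dvd_pq]]] := IH _ (ltn_Pdiv g_gt1 p_gt0) pg_gt0.
exists K.+1, q; split => //.
rewrite -(divnK (dvdn_gcdl p l)) expnSr mulnAC.
exact: dvdn_mul dvd_pq (dvdn_gcdr p l).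
Qed.

Lemma expn_eq1_mod (l M n0 : nat) : (0 < l)%N -> (0 < M)%N -> coprime M l ->
  exists E s : nat, (n0 <= E)%N /\ (l ^ E = s * M + 1)%N.
Proof.
move=> l_gt0 M_gt0 cML; set E := (totient M * n0)%N.
have lE1 : (l ^ E == 1 %[mod M])%N.
  by rewrite expnM -modnXm Euler_exp_totient 1?coprime_sym // modnXm exp1n.
have lE_gt0 : (1 <= l ^ E)%N by rewrite expn_gt0 l_gt0.
exists E, ((l ^ E - 1) %/ M)%N; split; first by rewrite leq_pmull // totient_gt0.
by rewrite eqn_mod_dvd // in lE1; rewrite divnK // subnK.
Qed.

Section Substitution.
Variables (A : finType) (l : nat) (sigma : A -> l.-tuple A).
Hypothesis l_gt0 : (0 < l)%N.

Lemma subst_iterD n k a c : (c < l ^ n)%N ->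
  subst_iter sigma (k + n) a c = subst_iter sigma n (subst_iter sigma k a 0) c.
Proof.
elim: n c => [|n IH] c c_lt.
  by move: c_lt; rewrite expn0 addn0; case: c.
rewrite addnS /= IH; last by rewrite ltn_divLR // -expnSr.
by apply: set_nth_default; rewrite size_tuple ltn_pmod.
Qed.

Lemma primitive_subst_onto : primitive sigma ->
  exists2 n0, (0 < n0)%N & forall E, (n0 <= E)%N -> forall a b : A,
    exists c, (c < l ^ E)%N && (subst_iter sigma E a c == b).
Proof.
move=> [n0 [n0_gt0 prim]]; exists n0 => // E n0E a b.
have [c [c_lt cE]] := prim (subst_iter sigma (E - n0) a 0) b.
exists c; rewrite (leq_trans c_lt) ?leq_pexp2l //=.
by rewrite -(subnK n0E) subst_iterD // cE.
Qed.

Lemma fixed_point_subst_iter (x : int -> A) : two_sided_fixed_point sigma x ->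
  forall K (m : int) c, (c < l ^ K)%N ->
  x ((l ^ K)%:Z * m + c%:Z) = subst_iter sigma K (x m) c.
Proof.
move=> x_fixed K m; elim: K => [|K IH] c c_lt /=.
  by move: c_lt; rewrite expn0 mul1r; case: c => // _; rewrite addr0.
rewrite -IH ?ltn_divLR -?expnSr // -(tnth_nth _ _ (Ordinal (ltn_pmod c l_gt0))).
rewrite -x_fixed /=; congr x.
by rewrite {1}(divn_eq c l) expnSr !PoszD !PoszM; ring.
Qed.

Lemma admissible_adjacent (x : int -> A) :
    primitive sigma -> two_sided_fixed_point sigma x -> admissible sigma x ->
  exists T : nat, x T%:Z = x (-1) /\ x T.+1%:Z = x 0.
Proof.
move=> [n0 [_ prim]] x_fixed [n [a [i [i_lt [xm1 x0]]]]].
have [u [u_lt uE]] := prim (x 0) a.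
have xu : x u%:Z = a.
  by rewrite -uE -(fixed_point_subst_iter x_fixed) // mulr0 add0r.
exists (l ^ n * u + i)%N; rewrite -addnS !PoszD !PoszM.
by rewrite !(fixed_point_subst_iter x_fixed) ?(ltnW i_lt) // xu.
Qed.

Definition code (w : seq 'I_l) : nat := foldl (fun acc (i : 'I_l) => acc * l + i)%N 0%N w.

Lemma code_rcons w i : code (rcons w i) = (code w * l + i)%N.
Proof. by rewrite /code foldl_rcons. Qed.

Lemma code_lt w : (code w < l ^ size w)%N.
Proof.
elim/last_ind: w => [|w i IH]; first by rewrite expn0.
rewrite code_rcons size_rcons expnSr.
have : (code w * l + l <= l ^ size w * l)%N by rewrite -mulSnr leq_mul2r IH orbT.
by have := ltn_ord i; lia.
Qed.

Lemma code_onto K c : (c < l ^ K)%N -> exists w, size w = K /\ code w = c.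
Proof.
elim: K c => [|K IH] c c_lt.
  by exists [::]; move: c_lt; rewrite expn0; case: c.
have [w [<- wc]] := IH (c %/ l)%N (ltac:(by rewrite ltn_divLR // -expnSr)).
exists (rcons w (Ordinal (ltn_pmod c l_gt0))).
by rewrite size_rcons code_rcons wc -divn_eq.
Qed.

Lemma gwalk_cat C w0 w : gwalk sigma (gwalk sigma C w0) w = gwalk sigma C (w0 ++ w).
Proof. by rewrite /gwalk foldl_cat. Qed.

Lemma gwalkE C w a :
  gwalk sigma C w a <-> exists2 b, C b & subst_iter sigma (size w) b (code w) = a.
Proof.
elim/last_ind: w a => [|w i IH] a; first by split=> [Ca | [b Cb <-]]; first exists a.
rewrite /gwalk foldl_rcons -/(gwalk sigma C w) size_rcons code_rcons /=.
rewrite divnMDl // divn_small // addn0 modnMDl modn_small //.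
split=> [[_ [/IH [b Cb <-] <-]] | [b Cb <-]].
  by exists b; rewrite // (tnth_nth b).
exists (subst_iter sigma (size w) b (code w)); rewrite (tnth_nth b).
by split=> //; apply/IH; exists b.
Qed.

Lemma gwalk_height_classE (x : int -> A) (h j : nat) w a :
  two_sided_fixed_point sigma x ->
  gwalk sigma (height_class x h j) w a <->
    exists n : int, x ((l ^ size w)%:Z * (j%:Z + n * h%:Z) + (code w)%:Z) = a.
Proof.
move=> x_fixed; rewrite gwalkE.
split=> [[_ [n <-] <-] | [n <-]].
  by exists n; rewrite (fixed_point_subst_iter x_fixed) ?code_lt.
by exists (x (j%:Z + n * h%:Z)); [exists n | rewrite (fixed_point_subst_iter x_fixed) ?code_lt].
Qed.

End Substitution.

Section IntSubgroup.
Variable G : int -> Prop.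
Hypotheses (G0 : G 0) (GB : forall g1 g2, G g1 -> G g2 -> G (g1 - g2)).

Lemma subgroupN g : G g -> G (- g).
Proof. by rewrite -sub0r; apply: GB. Qed.

Lemma subgroupD g1 g2 : G g1 -> G g2 -> G (g1 + g2).
Proof. by move=> G1 G2; rewrite -[g2]opprK; apply/GB/subgroupN. Qed.

Lemma subgroupMz z g : G g -> G (z * g).
Proof.
move=> Gg; have GMn (n : nat) : G (n%:Z * g).
  elim: n => [|n IH]; first by rewrite mul0r.
  by rewrite -addn1 PoszD mulrDl mul1r; apply: subgroupD.
by case: z => n; rewrite ?NegzE ?mulNr; [|apply: subgroupN].
Qed.

Lemma int_subgroup_cyclic (M : nat) : (0 < M)%N -> G M%:Z ->
  exists d : nat, [/\ (d %| M)%N, G d%:Z & forall m : nat, G m%:Z -> (d %| m)%N].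
Proof.
move=> M_gt0 GM.
pose Gb d := if excluded_middle_informative (G d%:Z) then true else false.
have GbP d : reflect (G d%:Z) (Gb d).
  by rewrite /Gb; case: excluded_middle_informative => ?; constructor.
have : exists d, (0 < d)%N && Gb d by exists M; rewrite M_gt0; apply/GbP.
case/ex_minnP=> d /andP[d_gt0 /GbP Gd] d_min.
have d_dvd (m : nat) : G m%:Z -> (d %| m)%N.
  move=> Gm; have Gmod : G (m %% d)%N%:Z.
    have := GB Gm (subgroupMz (m %/ d)%N%:Z Gd).
    by rewrite {1}(divn_eq m d) PoszD PoszM addrAC subrr add0r.
  case: (posnP (m %% d)) => [/eqP // | mod_gt0].
  by have := d_min _ (introT andP (conj mod_gt0 (introT (GbP _) Gmod))); rewrite leqNgt ltn_pmod.
by exists d; split; rewrite ?d_dvd.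
Qed.

Lemma is_height_subgroup (A : finType) (l : nat) (x : int -> A) (h M : nat) :
    is_height l x h -> (0 < M)%N -> coprime M l -> G M%:Z ->
    (forall m : nat, (1 <= m)%N -> x m%:Z = x 0 -> G m%:Z) ->
  G h%:Z.
Proof.
move=> [h_gt0 chl h_ret h_max] M_gt0 cML GM G_ret.
have [d [dM Gd d_dvd]] := int_subgroup_cyclic M_gt0 GM.
have d_gt0 : (0 < d)%N by apply: dvdn_gt0 dM.
have cdl : coprime d l := coprime_dvdl dM cML.
suff dh : (d %| h)%N by rewrite -(divnK dh) PoszM; apply: subgroupMz.
have lcm_le : (lcmn d h <= h)%N.
  apply: h_max; first by rewrite lcmn_gt0 d_gt0.
    apply: (@coprime_dvdl _ (d * h)); last by rewrite coprimeMl cdl.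
    by rewrite dvdn_lcm dvdn_mulr ?dvdn_mull.
  by move=> m m_ge1 xm; rewrite dvdn_lcm (h_ret _ m_ge1 xm) d_dvd //; apply: G_ret.
have <- : lcmn d h = h.
  by apply/eqP; rewrite eqn_leq lcm_le dvdn_leq ?dvdn_lcmr // lcmn_gt0 d_gt0.
exact: dvdn_lcml.
Qed.

End IntSubgroup.

Definition occurs_mod (A : Type) (x : int -> A) (M : nat) (a : A) (r : int) : Prop :=
  exists z : int, x (r + z * M%:Z) = a.

Section OccurrencesModulo.
Variables (A : finType) (l : nat) (sigma : A -> l.-tuple A) (x : int -> A).
Hypotheses (l_gt0 : (0 < l)%N) (x_fixed : two_sided_fixed_point sigma x).
Variables (M E s : nat).
Hypotheses (M_gt0 : (0 < M)%N) (lE_gt1 : (1 < l ^ E)%N) (lE : (l ^ E = s * M + 1)%N).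
Hypothesis subst_onto :
  forall a b : A, exists c, (c < l ^ E)%N && (subst_iter sigma E a c == b).

Local Notation occurs := (occurs_mod x M).

Lemma occurs_modMz a r z : occurs a r -> occurs a (r + z * M%:Z).
Proof. by move=> [z' <-]; exists (z' - z); congr x; ring. Qed.

(* Since l ^ E = 1 (mod M), position l ^ E * t + c lies in the class of t + c. *)
Lemma occurs_mod_subst a b c r : (c < l ^ E)%N -> subst_iter sigma E a c = b ->
  occurs a r -> occurs b (r + c%:Z).
Proof.
move=> c_lt <- [z <-]; exists (s%:Z * (r + z * M%:Z) + z).
rewrite -fixed_point_subst_iter // lE PoszD PoszM; congr x; ring.
Qed.

(* Primitivity leads back from b to a, so the classes along which b occurs are closed under
   the shift by c' + c, hence, being M-periodic, also under the opposite shift. *)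
Lemma occurs_mod_subst_inv a b c r : (c < l ^ E)%N -> subst_iter sigma E a c = b ->
  occurs b r -> occurs a (r - c%:Z).
Proof.
move=> c_lt abc occ_b.
have [c' /andP[c'_lt /eqP bac']] := subst_onto b a.
have occ_b_shift r' : occurs b r' -> occurs b (r' + (c'%:Z + c%:Z)).
  by move=> /(occurs_mod_subst c'_lt bac') /(occurs_mod_subst c_lt abc); rewrite addrA.
have := occurs_mod_subst c'_lt bac'
  (closed_shift_opp M_gt0 (@occurs_modMz b) occ_b_shift occ_b).
suff -> : r - (c'%:Z + c%:Z) + c'%:Z = r - c%:Z by [].
ring.
Qed.

Definition tau (b : A) : nat := xchoose (subst_onto (x 0) b).

Lemma occurs_mod_tau b r : occurs b r <-> occurs (x 0) (r - (tau b)%:Z).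
Proof.
have /andP[tau_lt /eqP tauE] := xchooseP (subst_onto (x 0) b).
split; first exact: occurs_mod_subst_inv.
by move/(occurs_mod_subst tau_lt tauE); rewrite subrK.
Qed.

Definition mod_period (g : int) : Prop :=
  forall r, occurs (x 0) r <-> occurs (x 0) (r + g).

Lemma mod_period0 : mod_period 0.
Proof. by move=> r; rewrite addr0. Qed.

Lemma mod_periodB g1 g2 : mod_period g1 -> mod_period g2 -> mod_period (g1 - g2).
Proof.
move=> P1 P2 r; rewrite addrA; have := P2 (r + g1 - g2); rewrite subrK => P2'.
exact: iff_trans (P1 r) (iff_sym P2').
Qed.

Lemma mod_periodMz z : mod_period (z * M%:Z).
Proof.
apply: (subgroupMz mod_period0 mod_periodB z) => r.
split=> [/(occurs_modMz 1) | /(occurs_modMz (-1))]; rewrite ?mul1r //.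
by rewrite mulN1r addrK.
Qed.

Lemma mod_period_subst a b c : (c < l ^ E)%N -> subst_iter sigma E a c = b ->
  mod_period ((tau b)%:Z - c%:Z - (tau a)%:Z).
Proof.
move=> c_lt abc r.
have -> : r + ((tau b)%:Z - c%:Z - (tau a)%:Z) = r + (tau b)%:Z - c%:Z - (tau a)%:Z by ring.
rewrite -occurs_mod_tau -[in X in X <-> _](addrK (tau b)%:Z r) -occurs_mod_tau.
split; first exact: occurs_mod_subst_inv.
by move/(occurs_mod_subst c_lt abc); rewrite subrK.
Qed.

(* By [occurs_mod_tau], x 0 occurs along the class of [phase t] modulo M. *)
Definition phase (t : int) : int := t - (tau (x t))%:Z.

Lemma mod_period_phase_step t c : (c < l ^ E)%N ->
  mod_period (phase ((l ^ E)%:Z * t + c%:Z) - phase t).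
Proof.
move=> c_lt; have xE := fixed_point_subst_iter l_gt0 x_fixed t c_lt.
have := mod_periodB (mod_periodMz (s%:Z * t)) (mod_period_subst c_lt (esym xE)).
by rewrite /phase lE PoszD PoszM; congr mod_period; ring.
Qed.

Hypothesis x_adjacent : exists T : nat, x T%:Z = x (-1) /\ x T.+1%:Z = x 0.

Lemma mod_period_phase t : mod_period (phase t - phase 0).
Proof.
pose Q t := mod_period (phase t - phase 0).
have Q0 : Q 0 by rewrite /Q subrr; apply: mod_period0.
have QS t' c : (c < l ^ E)%N -> Q t' -> Q ((l ^ E)%:Z * t' + c%:Z).
  move=> c_lt Qt; have := subgroupD mod_period0 mod_periodB (mod_period_phase_step t' c_lt) Qt.
  by rewrite /Q subrKA.
have [T [xT xT1]] := x_adjacent.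
have Qm1 : Q (-1).
  have := mod_periodB (nat_base_ind lE_gt1 Q0 QS T) (nat_base_ind lE_gt1 Q0 QS T.+1).
  by rewrite /Q /phase xT xT1 -addn1 PoszD; congr mod_period; ring.
exact: int_base_ind lE_gt1 Q0 Qm1 QS t.
Qed.

Lemma occurs_mod_height (h : nat) : coprime M l -> is_height l x h ->
  forall r n, occurs (x (r + n * h%:Z)) r.
Proof.
move=> cML x_height r n.
have Ph : mod_period h%:Z.
  apply: (is_height_subgroup mod_period0 mod_periodB x_height M_gt0 cML).
    by have := mod_periodMz 1; rewrite mul1r.
  move=> m _ xm; have := mod_period_phase m%:Z.
  by rewrite /phase xm; congr mod_period; ring.
apply/occurs_mod_tau; apply/(subgroupMz mod_period0 mod_periodB n Ph).
have := occurs_mod_tau (x (r + n * h%:Z)) (r + n * h%:Z).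
by rewrite addrAC => <-; exists 0; rewrite mul0r addr0.
Qed.

End OccurrencesModulo.

Lemma int_mixed_radix_eq (k : int) (L h : nat) : (0 < L)%N -> (0 < h)%N ->
  exists (j c : nat) (n : int),
    [/\ (j < h)%N, (c < L)%N & k = L%:Z * (j%:Z + n * h%:Z) + c%:Z].
Proof.
move=> L_gt0 h_gt0; have [m [c [c_lt ->]]] := int_divn_eq k L_gt0.
have [n [j [j_lt ->]]] := int_divn_eq m h_gt0.
by exists j, c, n; split=> //; congr (_ * _ + _); ring.
Qed.

Lemma occurs_mod_const (A B : Type) (x : int -> A) (phi : A -> B) (M p : nat) k b a :
    (p %| M)%N -> (forall n, phi (x (k + n * p%:Z)) = b) ->
  occurs_mod x M a k -> phi a = b.
Proof.
move=> /dvdnP[t ->] xk [z <-].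
by rewrite PoszM mulrA; apply: xk.
Qed.

Section Vertices.
Variables (A : finType) (B : Type) (l : nat) (sigma : A -> l.-tuple A) (x : int -> A).
Variables (phi : A -> B) (h : nat).
Hypotheses (l_gt1 : (1 < l)%N) (x_fixed : two_sided_fixed_point sigma x).

Let l_gt0 : (0 < l)%N := ltnW l_gt1.

Lemma image_singleton_gwalk_height_class j w (b : B) :
    (forall a, gwalk sigma (height_class x h j) w a -> phi a = b) ->
  image_singleton phi (gwalk sigma (height_class x h j) w).
Proof.
move=> phiE; exists b; split=> //.
by exists (x ((l ^ size w)%:Z * (j%:Z + 0 * h%:Z) + (code w)%:Z));
  apply/gwalk_height_classE => //; exists 0.
Qed.

Hypothesis h_gt0 : (0 < h)%N.

Lemma const_arith_subseq_of_vertex j w :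
    image_singleton phi (gwalk sigma (height_class x h j) w) ->
  has_const_arith_subseq (fun n => phi (x n)).
Proof.
move=> [b [_ phiE]].
exists (l ^ size w * h)%N, ((l ^ size w)%:Z * j%:Z + (code w)%:Z), b.
split; first by rewrite muln_gt0 expn_gt0 l_gt0.
move=> n; apply/phiE/gwalk_height_classE => //; exists n.
by congr x; rewrite PoszM; ring.
Qed.

Lemma periodic_of_singleton_walks N :
    (forall j w, (j < h)%N -> size w = N ->
       image_singleton phi (gwalk sigma (height_class x h j) w)) ->
  periodic (fun n => phi (x n)).
Proof.
move=> walksN; exists (l ^ N * h)%N; split; first by rewrite muln_gt0 expn_gt0 l_gt0.
have lN_gt0 : (0 < l ^ N)%N by rewrite expn_gt0 l_gt0.
move=> t; have [j [c [n [j_lt c_lt ->]]]] := int_mixed_radix_eq t lN_gt0 h_gt0.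
have [w [wN <-]] := code_onto l_gt0 c_lt.
have [b [_ phiE]] := walksN j w j_lt wN.
have yE n' : phi (x ((l ^ N)%:Z * (j%:Z + n' * h%:Z) + (code w)%:Z)) = b.
  by apply/phiE/gwalk_height_classE => //; exists n'; rewrite wN.
have -> : (l ^ N)%:Z * (j%:Z + n * h%:Z) + (code w)%:Z + (l ^ N * h)%N%:Z =
    (l ^ N)%:Z * (j%:Z + (n + 1) * h%:Z) + (code w)%:Z by rewrite PoszM; ring.
by rewrite !yE.
Qed.

Hypotheses (x_prim : primitive sigma) (x_adm : admissible sigma x) (x_height : is_height l x h).

Lemma occurs_mod_height_mul q : coprime q l -> (0 < q)%N ->
  forall r n, occurs_mod x (h * q) (x (r + n * h%:Z)) r.
Proof.
move=> cql q_gt0; have [_ chl _ _] := x_height.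
have M_gt0 : (0 < h * q)%N by rewrite muln_gt0 h_gt0.
have cMl : coprime (h * q) l by rewrite coprimeMl chl.
have [n0 n0_gt0 onto] := primitive_subst_onto l_gt0 x_prim.
have [E [s [n0E lE]]] := expn_eq1_mod n0 l_gt0 M_gt0 cMl.
have lE_gt1 : (1 < l ^ E)%N.
  by apply: leq_trans l_gt1 _; rewrite -{1}(expn1 l) leq_pexp2l // (leq_trans n0_gt0).
exact (occurs_mod_height l_gt0 x_fixed M_gt0 lE_gt1 lE (onto E n0E)
  (admissible_adjacent l_gt0 x_prim x_fixed x_adm) cMl x_height).
Qed.

Lemma gwalk_height_class_occurs q j w (n : int) a : coprime q l -> (0 < q)%N ->
    gwalk sigma (height_class x h j) w a ->
  occurs_mod x (l ^ size w * (h * q)) a ((l ^ size w)%:Z * (j%:Z + n * h%:Z) + (code w)%:Z).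
Proof.
move=> cql q_gt0 /gwalk_height_classE [] // n' <-.
have [z xz] := occurs_mod_height_mul cql q_gt0 (j%:Z + n * h%:Z) (n' - n).
have -> : j%:Z + n' * h%:Z = j%:Z + n * h%:Z + (n' - n) * h%:Z by ring.
exists z; rewrite !(fixed_point_subst_iter l_gt0 x_fixed) ?code_lt // -xz.
rewrite -(fixed_point_subst_iter l_gt0 x_fixed) ?code_lt //; congr x.
by rewrite !PoszM; ring.
Qed.

Lemma vertex_of_const_arith_subseq : has_const_arith_subseq (fun n => phi (x n)) ->
  exists j w, (j < h)%N /\ image_singleton phi (gwalk sigma (height_class x h j) w).
Proof.
move=> [p [k [b [p_gt0 yk]]]].
have [K [q [cql q_gt0 p_dvd]]] := coprime_part_dvd l p_gt0.
have lK_gt0 : (0 < l ^ K)%N by rewrite expn_gt0 l_gt0.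
have [j [c [n [j_lt c_lt kE]]]] := int_mixed_radix_eq k lK_gt0 h_gt0.
have [w [wK cE]] := code_onto l_gt0 c_lt.
rewrite kE -cE -wK in yk.
exists j, w; split=> //; apply: image_singleton_gwalk_height_class => a.
move=> /(gwalk_height_class_occurs n cql q_gt0); apply: occurs_mod_const yk.
by rewrite mulnCA dvdn_mull // wK.
Qed.

Lemma singleton_walks_of_periodic : periodic (fun n => phi (x n)) ->
  exists N, forall j w0 w, (N <= size w)%N ->
    image_singleton phi (gwalk sigma (gwalk sigma (height_class x h j) w0) w).
Proof.
move=> [p [p_gt0 y_per]].
have [K [q [cql q_gt0 p_dvd]]] := coprime_part_dvd l p_gt0.
exists K => j w0 w Kw; rewrite gwalk_cat; set W := w0 ++ w.
pose k := (l ^ size W)%:Z * (j%:Z + 0 * h%:Z) + (code W)%:Z.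
have yk n : phi (x (k + n * p%:Z)) = phi (x k) := periodic_mulz y_per k n.
apply: (image_singleton_gwalk_height_class (b := phi (x k))) => a.
move=> /(gwalk_height_class_occurs 0 cql q_gt0); apply: occurs_mod_const yk.
have KW : (K <= size W)%N by rewrite size_cat (leq_trans Kw) ?leq_addl.
by rewrite mulnCA dvdn_mull // -(subnK KW) expnD -mulnA dvdn_mull.
Qed.

End Vertices.

Theorem mainTheorem15 (A : finType) (B : Type) (l : nat)
    (sigma : A -> l.-tuple A) (x : int -> A) (phi : A -> B) (h : nat) :
  (2 <= l)%N ->
  primitive sigma ->
  two_sided_fixed_point sigma x ->
  admissible sigma x ->
  ~ periodic x ->
  is_height l x h ->
  let y := fun n : int => phi (x n) in
  (has_const_arith_subseq y <->
     exists (j : nat) (w : seq 'I_l), (j < h)%N /\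
       image_singleton phi (gwalk sigma (height_class x h j) w))
  /\
  (periodic y <->
     exists N : nat, forall (j : nat) (w0 w : seq 'I_l), (j < h)%N ->
       (N <= size w)%N ->
       image_singleton phi (gwalk sigma (gwalk sigma (height_class x h j) w0) w)).
Proof.
move=> l_gt1 x_prim x_fixed x_adm _ x_height y.
have [h_gt0 _ _ _] := x_height.
split; split.
- exact: (vertex_of_const_arith_subseq l_gt1 x_fixed h_gt0 x_prim x_adm x_height).
- move=> [j [w [_ vertex_j]]].
  exact: (const_arith_subseq_of_vertex l_gt1 x_fixed h_gt0 vertex_j).
- move/(singleton_walks_of_periodic l_gt1 x_fixed h_gt0 x_prim x_adm x_height).
  by move=> [N walks]; exists N => j w0 w _; apply: walks.
- move=> [N walks]; apply: (periodic_of_singleton_walks l_gt1 x_fixed h_gt0 (N := N)).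
  by move=> j w j_lt wN; apply: (walks j [::]); rewrite ?wN.
Qed.
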